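(* Let $F=\{\mathbb{R}^{n};f_{1},\dots,f_{m}\}$ be an IFS of contractive similitudes (consisting of at least two distinct maps), let $T\subset\mathbb{R}^{n}$ be closed, and let $c$ be a cost function as described in the context. Then for every $\mathbf{i}\in\Sigma^{\infty}$ and every $k\geq 0$, $\Pi_{T}(\mathbf{i}|k)$ and $\Pi_{T}(\mathbf{i})$ are well-defined collections of closed subsets of $\mathbb{R}^{n}$, and \[ \Pi_{T}(\mathbf{i}|0)\subset\Pi_{T}(\mathbf{i}|1)\subset\Pi_{T}(\mathbf{i}|2)\subset\cdots . \]
   Context: An IFS $F=\{\mathbb{R}^{n};f_{1},\dots,f_{m}\}$ is a finite collection of maps $f_{i}:\mathbb{R}^{n}\to\mathbb{R}^{n}$ with $|f_{i}(x)-f_{i}(y)|=\lambda_{i}|x-y|$, $\lambda_{i}\in(0,1)$. Let $\Sigma=\{1,\dots,m\}$, $\Sigma^{\infty}$ the set of infinite sequences $\mathbf{i}=i_{1}i_{2}\dots$ over $\Sigma$, and for $\mathbf{i}\in\Sigma^{\infty}$ write $\mathbf{i}|k=i_{1}\dots i_{k}$, $\mathbf{i}|0=\emptyset$. Write $f_{(\mathbf{j}|l)}=f_{j_{1}}\circ\cdots\circ f_{j_{l}}$ and $f_{-(\mathbf{i}|k)}=f_{i_{1}}^{-1}\circ\cdots\circ f_{i_{k}}^{-1}$ (identity for $k=0$). Assign costs $c_{i}>0$ to the maps $f_i$ and define $c(\mathbf{i}|k)=c_{i_{1}}+\cdots+c_{i_{k}}$, $c(\emptyset)=0$. Define \[ \Pi_{T}(\mathbf{i}|k)=f_{-(\mathbf{i}|k)}\big(\{f_{(\mathbf{j}|l)}(T):\mathbf{j}\in\Sigma^{\infty},\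 l\in\mathbb{N},\ c(\mathbf{j}|l-1)\leq c(\mathbf{i}|k)<c(\mathbf{j}|l)\}\big), \] with $\Pi_{T}(\emptyset)=\{f_{1}(T),\dots,f_{m}(T)\}$, and $\Pi_{T}(\mathbf{i})=\bigcup_{k\geq1}\Pi_{T}(\mathbf{i}|k)$. Here $\mathbb{N}=\{1,2,\dots\}$ and a map applied to a collection of sets is applied to each member. *)

(* R : realType, points of R^n are row vectors 'rV[R]_n
   (their canonical topology is the product = Euclidean topology). *)
From HB Require Import structures.
From mathcomp Require Import all_boot all_order all_algebra.
From mathcomp Require Import all_classical all_reals all_analysis.
Set Implicit Arguments. Unset Strict Implicit. Unset Printing Implicit Defensive.
Import Order.TTheory GRing.Theory Num.Theory numFieldNormedType.Exports.
Local Open Scope classical_set_scope.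
Local Open Scope ring_scope.

Section IFSDefs.
Variables (R : realType) (n m : nat).
Notation V := 'rV[R]_n.

Definition euclid_dist (x y : V) : R := Num.sqrt (\sum_(k < n) (x 0 k - y 0 k) ^+ 2).

(* f : IFS maps, c : costs, words are infinite sequences nat -> 'I_m
   (the letter i_{t+1} is (i t)). *)
Variables (f : 'I_m -> V -> V) (c : 'I_m -> R).

Definition cost (i : nat -> 'I_m) (k : nat) : R := \sum_(t < k) c (i t).

Fixpoint fword (j : nat -> 'I_m) (l : nat) : V -> V :=
  match l with
  | 0 => id
  | l'.+1 => fword j l' \o f (j l')
  end.

(* f_{-(i|k)}(A) = f_{i_1}^{-1}( ... f_{i_k}^{-1}(A) ...), inverses of sets
   rendered as preimages *)
Fixpoint finvword (i : nat -> 'I_m) (k : nat) (A : set V) : set V :=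
  match k with
  | 0 => A
  | k'.+1 => finvword i k' (f (i k') @^-1` A)
  end.

Definition PiT (T : set V) (i : nat -> 'I_m) (k : nat) : set (set V) :=
  match k with
  | 0 => [set f a @` T | a in [set: 'I_m]]
  | _ => [set B | exists j : nat -> 'I_m, exists l : nat,
            (0 < l)%N /\ cost j l.-1 <= cost i k /\ cost i k < cost j l /\
            B = finvword i k (fword j l @` T)]
  end.

Definition PiT_inf (T : set V) (i : nat -> 'I_m) : set (set V) :=
  \bigcup_(k in [set k : nat | (0 < k)%N]) PiT T i k.

End IFSDefs.

(* Each f_a is a similitude of ratio lam_a > 0, hence of the form
   x |-> f_a 0 + lam_a * x M with M orthogonal; in particular it is a
   homeomorphism of R^n, so the images and preimages used to build the pieces
   of Pi_T(i|k) are closed.  For monotonicity, a piece of level k built from a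
   word j|l is also a piece of level k+1, built from the word i_{k+1} j of
   length l+1: both sides of the cost condition gain c_{i_{k+1}}, and the new
   first map f_{i_{k+1}} is cancelled by the preimage under f_{i_{k+1}}, f
   being injective.  At level 0 the extra letter is needed to make the second
   cost inequality strict, which is where c > 0 is used. *)

From HB Require Import structures.
From mathcomp Require Import all_boot all_order all_algebra.
From mathcomp Require Import all_classical all_reals all_analysis.
From mathcomp Require Import ring lra.
Import Order.TTheory GRing.Theory Num.Theory numFieldNormedType.Exports.
Local Open Scope classical_set_scope.
Local Open Scope ring_scope.

Set Implicit Arguments.
Unset Strict Implicit.
Unset Printing Implicit Defensive.

Lemma image_can (T U : Type) (g : T -> U) (gi : U -> T) (A : set T) :
  cancel g gi -> cancel gi g -> g @` A = gi @^-1` A.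
Proof.
move=> gK giK; apply/seteqP; split => [_ [x Ax <-]|y Agiy] /=; first by rewrite gK.
by exists (gi y); rewrite ?giK.
Qed.

Lemma preimage_image_inj (T U : Type) (g : T -> U) (A : set T) :
  injective g -> g @^-1` (g @` A) = A.
Proof.
move=> g_inj; apply/seteqP; split => [x [y Ay /g_inj <-] //|x Ax].
by exists x.
Qed.

Section Homeomorphism.
Variables (T U : topologicalType).

Definition homeomorphism (g : T -> U) (gi : U -> T) :=
  [/\ cancel g gi, cancel gi g, continuous g & continuous gi].

Lemma homeo_closed_image (g : T -> U) (gi : U -> T) (A : set T) :
  homeomorphism g gi -> closed A -> closed (g @` A).
Proof.
case=> gK giK _ gi_cont; rewrite (image_can _ gK giK).
by move: A; apply/continuous_closedP.
Qed.

End Homeomorphism.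

Section Similitude.
Variables (R : realType) (n : nat).
Local Notation V := 'rV[R]_n.
Implicit Types (x y u v : V) (h g : V -> V).

Definition dot u v : R := \sum_k u 0 k * v 0 k.

Lemma dotBB u v : dot (u - v) (u - v) = dot u u + dot v v - 2 * dot u v.
Proof.
rewrite /dot mulr_sumr -big_split -sumrB /=; apply: eq_bigr => k _.
by rewrite !mxE; ring.
Qed.

Lemma dotZZ (s : R) u : dot (s *: u) (s *: u) = s ^+ 2 * dot u u.
Proof. by rewrite /dot mulr_sumr; apply: eq_bigr => k _; rewrite !mxE; ring. Qed.

Lemma dot_delta u i : dot u (delta_mx 0 i) = u 0 i.
Proof.
rewrite /dot (bigD1 i) //= big1 ?addr0 => [|k /negPf ki]; rewrite mxE eqxx /=.
  by rewrite eqxx mulr1.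
by rewrite ki mulr0.
Qed.

Lemma mulmx_tr_dot u (N : 'M[R]_n) j : (u *m N^T) 0 j = dot u (row j N).
Proof. by rewrite !mxE; apply: eq_bigr => k _; rewrite !mxE. Qed.

Lemma euclid_dist_sqr x y : euclid_dist x y ^+ 2 = dot (x - y) (x - y).
Proof.
rewrite sqr_sqrtr; last by apply: sumr_ge0 => k _; exact: sqr_ge0.
by apply: eq_bigr => k _; rewrite !mxE expr2.
Qed.

Section Isometry0.
Variable h : V -> V.
Hypotheses (h0 : h 0 = 0)
  (h_iso : forall x y, dot (h x - h y) (h x - h y) = dot (x - y) (x - y)).

Lemma isometry0_dot x y : dot (h x) (h y) = dot x y.
Proof.
have h_norm z : dot (h z) (h z) = dot z z by have := h_iso z 0; rewrite h0 !subr0.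
have := h_iso x y; rewrite !dotBB !h_norm => E.
have /(congr1 (fun t => t / 2)) : 2 * dot (h x) (h y) = 2 * dot x y by lra.
by rewrite ![2 * _ / 2]mulrC !mulKf ?pnatr_eq0.
Qed.

(* The rows of [M] are the images of the standard basis; preservation of [dot]
   makes [h x *m M^T] the coordinate vector of [x]. *)
Lemma isometry0_mulmx :
  exists2 M : 'M[R]_n, M^T *m M = 1%:M & forall x, h x = x *m M.
Proof.
pose M : 'M[R]_n := \matrix_i h (delta_mx 0 i).
have hMT x : h x *m M^T = x.
  by apply/rowP => j; rewrite mulmx_tr_dot rowK isometry0_dot dot_delta.
have MMT : M *m M^T = 1%:M.
  apply/row_matrixP => i; rewrite row_mul rowK hMT.
  by apply/rowP => j; rewrite !mxE eqxx eq_sym.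
have MTM := mulmx1C MMT.
by exists M => // x; rewrite -[h x]mulmx1 -MTM mulmxA hMT.
Qed.

End Isometry0.

Definition similitude g (L : R) :=
  forall x y, euclid_dist (g x) (g y) = L * euclid_dist x y.

Lemma similitude_affine g L : 0 < L -> similitude g L ->
  exists2 M : 'M[R]_n, M^T *m M = 1%:M & forall x, g x = g 0 + L *: (x *m M).
Proof.
move=> L_gt0 g_sim; pose h x := L^-1 *: (g x - g 0).
have h0 : h 0 = 0 by rewrite /h subrr scaler0.
have h_iso x y : dot (h x - h y) (h x - h y) = dot (x - y) (x - y).
  rewrite /h -scalerBr opprB addrA subrK dotZZ -!euclid_dist_sqr g_sim.
  by rewrite exprMn mulrA -exprMn mulVf ?gt_eqF // expr1n mul1r.
have [M MTM hM] := isometry0_mulmx h0 h_iso.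
exists M => // x; rewrite -hM /h scalerA mulfV ?gt_eqF // scale1r.
by rewrite addrC subrK.
Qed.

Lemma mulmx_continuous (N : 'M[R]_n) : continuous (fun x : V => x *m N).
Proof.
have -> : (fun x : V => x *m N) = fun x => \sum_(k < n) x 0 k *: row k N.
  by apply: funext => x; rewrite mulmx_sum_row.
apply: continuous_big => [|k _]; first exact: add_continuous.
by move=> x; apply: continuousZr_tmp; exact: coord_continuous.
Qed.

Lemma affine_continuous (s : R) (a b : V) (N : 'M[R]_n) :
  continuous (fun x : V => (s *: (x - a)) *m N + b).
Proof.
have -> : (fun x : V => (s *: (x - a)) *m N + b) =
    ((fun x => x *m N) \o (s \*: (id - cst a)) + cst b)%R by [].
move=> x; apply: continuousD; last exact: cst_continuous.
apply: continuous_comp; last exact: mulmx_continuous.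
apply: continuousZl_tmp; apply: continuousB; [exact: cvg_id | exact: cst_continuous].
Qed.

Lemma similitude_homeomorphism g L : 0 < L -> similitude g L ->
  exists gi, homeomorphism g gi.
Proof.
move=> L_gt0 g_sim; have [M MTM gM] := similitude_affine L_gt0 g_sim.
have MMT := mulmx1C MTM.
exists (fun y => (L^-1 *: (y - g 0)) *m M^T + 0); split.
- move=> x; rewrite gM addrAC subrr add0r scalerA mulVf ?gt_eqF //.
  by rewrite scale1r -mulmxA MMT mulmx1 addr0.
- move=> y; rewrite gM addr0 -mulmxA MTM mulmx1 scalerA mulfV ?gt_eqF //.
  by rewrite scale1r addrC subrK.
- have -> : g = fun x => (L *: (x - 0)) *m M + g 0.
    by apply: funext => x; rewrite gM subr0 -scalemxAl addrC.
  exact: affine_continuous.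
- exact: affine_continuous.
Qed.

End Similitude.

Section Words.
Variables (R : realType) (n m : nat).
Variables (f : 'I_m -> 'rV[R]_n -> 'rV[R]_n) (c : 'I_m -> R).
Local Notation V := 'rV[R]_n.
Implicit Types (i j : nat -> 'I_m) (A : set V).

Hypothesis f_continuous : forall a, continuous (f a).
Hypothesis f_closed_image : forall a A, closed A -> closed (f a @` A).
Hypothesis f_inj : forall a, injective (f a).
Hypothesis c_gt0 : forall a, 0 < c a.

Definition scons (a : 'I_m) j : nat -> 'I_m :=
  fun t => if t is t'.+1 then j t' else a.

Lemma cost_recr i k : cost c i k.+1 = cost c i k + c (i k).
Proof. exact: big_ord_recr. Qed.

Lemma cost_scons a j l : cost c (scons a j) l.+1 = c a + cost c j l.
Proof. exact: big_ord_recl. Qed.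

Lemma fword_scons a j l : fword f (scons a j) l.+1 = f a \o fword f j l.
Proof. by apply: funext; elim: l => [|l IH] x //=; exact: IH. Qed.

Lemma closed_fword j l A : closed A -> closed (fword f j l @` A).
Proof.
elim: l A => [|l IH] A A_closed /=; first by rewrite image_id.
by rewrite -image_comp; apply/IH/f_closed_image.
Qed.

Lemma closed_finvword i k A : closed A -> closed (finvword f i k A).
Proof.
elim: k A => [|k IH] A A_closed //=.
by apply/IH; move: A A_closed; apply/continuous_closedP.
Qed.

Lemma closed_PiT (T : set V) i k B : closed T -> PiT f c T i k B -> closed B.
Proof.
move=> T_closed; case: k => [|k] /=; first by case=> a _ <-; exact: f_closed_image.
by case=> j [l [_ [_ [_ ->]]]]; apply: (@closed_finvword i k.+1); exact: closed_fword.
Qed.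

Lemma finvword_scons i k j l A :
  finvword f i k.+1 (fword f (scons (i k) j) l.+1 @` A) =
  finvword f i k (fword f j l @` A).
Proof. by rewrite fword_scons -image_comp /= preimage_image_inj. Qed.

Lemma PiT_subS (T : set V) i k : PiT f c T i k `<=` PiT f c T i k.+1.
Proof.
case: k => [|k] B.
  case=> a _ <-; exists (scons (i 0%N) (scons a i)), 2%N.
  rewrite !cost_scons cost_recr /cost !big_ord0 finvword_scons.
  by rewrite !addr0 add0r ltrDl c_gt0.
case=> j [l [l_gt0 [c_le [c_lt ->]]]].
case: l l_gt0 c_le c_lt => // l _ c_le c_lt.
exists (scons (i k.+1) j), l.+2; rewrite !cost_scons cost_recr finvword_scons.
by rewrite [_ + c _]addrC lerD2l ltrD2l.
Qed.

End Words.

Theorem theorem2 (R : realType) (n m : nat)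
  (f : 'I_m -> 'rV[R]_n -> 'rV[R]_n) (lam : 'I_m -> R) (c : 'I_m -> R)
  (T : set 'rV[R]_n) :
  (forall a, 0 < lam a < 1) ->
  (forall a x y, euclid_dist (f a x) (f a y) = lam a * euclid_dist x y) ->
  (exists a b, f a <> f b) ->
  closed T ->
  (forall a, 0 < c a) ->
  (forall a, bijective (f a)) /\
  (forall (i : nat -> 'I_m) (k : nat) (B : set 'rV[R]_n),
      PiT f c T i k B -> closed B) /\
  (forall (i : nat -> 'I_m) (B : set 'rV[R]_n),
      PiT_inf f c T i B -> closed B) /\
  (forall (i : nat -> 'I_m) (k : nat), PiT f c T i k `<=` PiT f c T i k.+1).
Proof.
move=> lam_bounds f_sim _ T_closed c_gt0.
have f_homeo a : exists gi, homeomorphism (f a) gi.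
  by apply: (similitude_homeomorphism _ (f_sim a)); case/andP: (lam_bounds a).
have f_cont a : continuous (f a) by have [gi []] := f_homeo a.
have f_inj a : injective (f a) by have [gi [fK _ _ _]] := f_homeo a; exact: can_inj fK.
have f_closed_image a A : closed A -> closed (f a @` A).
  by have [gi f_gi] := f_homeo a; exact: homeo_closed_image f_gi.
have PiT_closed := closed_PiT f_cont f_closed_image T_closed.
split; first by move=> a; have [gi [fK giK _ _]] := f_homeo a; exact: Bijective fK giK.
split; first exact: PiT_closed.
split; first by move=> i B [k _]; exact: PiT_closed.
by move=> i k; exact: PiT_subS.
Qed.
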